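(* Let $h>0$, $n\in\mathbb{N}$, and let $\lambda:\mathbb{T}\to\mathbb{R}$ be an $n$-cycle with values $\lambda_0,\dots,\lambda_{n-1}\in\mathbb{R}\setminus\{\pm\tfrac1h\}$, such that $0<|e_{\lambda}(nh)|\neq1$ and $0<|e_{-\lambda}(nh)|\neq1$. Define for $t\in\mathbb{T}$ $$p(t)=\lambda(t+2h),\quad q(t)=2\Delta_h\lambda(t+h)+\Delta_h\lambda(t+2h)-\lambda(t+2h)\lambda(t+3h),$$ $$r(t)=\Delta_h^2\lambda(t)+\lambda(t)\Delta_h\lambda(t+2h)-\lambda(t)\lambda(t+2h)\lambda(t+3h).$$ Then the third-order equation $$\Delta_h^3y(t)+p(t)\Delta_h^2y(t)+q(t)\Delta_h y(t)+r(t)y(t)=0,\qquad t\in\mathbb{T},$$ has Hyers–Ulam stability on $\mathbb{T}$ with Hyers–Ulam stability constant $K=K_0(\lambda)\bigl(K_0(-\lambda)\bigr)^2$.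
   Context: Fix $h>0$ and let $\mathbb{T}=\{0,h,2h,3h,\dots\}$. For $x:\mathbb{T}\to\mathbb{R}$, $\Delta_h x(t)=\frac{x(t+h)-x(t)}{h}$ and $\Delta_h^2x=\Delta_h(\Delta_h x)$, $\Delta_h^3x=\Delta_h(\Delta_h^2 x)$. An $n$-cycle is a function $\mu:\mathbb{T}\to\mathbb{R}$ with $\mu(t)=\mu_k$ whenever $t/h\equiv k\pmod n$, $k\in\{0,\dots,n-1\}$, which has period $n$ and no smaller period. For such $\mu$ define the discrete exponential $e_\mu(t)=\prod_{k=0}^{t/h-1}(1+h\mu(kh))$ (empty product $=1$), so $e_\mu(nh)=\prod_{k=0}^{n-1}(1+h\mu_k)$. For $k\in\{0,\dots,n-1\}$ define $$S_k(\mu)=\sum_{j=1}^{n}\prod_{i=0}^{j-1}\frac{1}{|1+h\mu_{(k+i)\bmod n}|},$$ (e.g. $S_0(\mu)=\frac{1}{|1+h\mu_0|}+\frac{1}{|1+h\mu_0||1+h\mu_1|}+\dots+\frac{1}{|1+h\mu_0|\cdots|1+h\mu_{n-1}|}$), and, when $0<|e_\mu(nh)|\neq1$, $$K_0(\mu)=\frac{h|e_\mu(nh)|}{\bigl|1-|e_\mu(nh)|\bigr|}\max\{S_0(\mu),\dots,S_{n-1}(\mu)\}.$$ Here $-\lambda$ denotes the $n$-cycle with values $-\lambda_0,\dots,-\lambda_{n-1}$. Hyers–Ulam stability: an equation $\mathcal{L}[y](t)=f(t)$, $t\in\mathbb{T}$ (with $\mathcal{L}$ a linear difference operator) has Hyers–Ulam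 stability on $\mathbb{T}$ with Hyers–Ulam stability constant $K>0$ if for every $\varepsilon>0$ and every $\xi:\mathbb{T}\to\mathbb{R}$ with $|\mathcal{L}[\xi](t)-f(t)|\le\varepsilon$ for all $t\in\mathbb{T}$, there is a solution $y:\mathbb{T}\to\mathbb{R}$ of the equation with $|\xi(t)-y(t)|\le K\varepsilon$ for all $t\in\mathbb{T}$. The minimum Hyers–Ulam stability constant is the smallest such $K$. *)

(* concrete reals R. The time scale T = {0,h,2h,...} is
   identified with nat via t = k*h; functions on T are functions nat -> R. *)
From Stdlib Require Import Reals Lra Lia.
Open Scope R_scope.

Definition delta (h : R) (x : nat -> R) : nat -> R :=
  fun k => (x (S k) - x k) / h.

Fixpoint rsum (f : nat -> R) (m : nat) : R :=
  match m with O => 0 | S m' => rsum f m' + f m' end.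
Fixpoint rprod (f : nat -> R) (m : nat) : R :=
  match m with O => 1 | S m' => rprod f m' * f m' end.

Fixpoint rmax_upto (f : nat -> R) (m : nat) : R :=
  match m with O => f O | S m' => Rmax (rmax_upto f m') (f (S m')) end.

Definition periodic (mu : nat -> R) (m : nat) : Prop :=
  forall k, mu (k + m)%nat = mu k.
Definition is_n_cycle (n : nat) (mu : nat -> R) : Prop :=
  (1 <= n)%nat /\ periodic mu n /\
  forall m, (1 <= m)%nat -> (m < n)%nat -> ~ periodic mu m.

Definition e_nh (h : R) (n : nat) (mu : nat -> R) : R :=
  rprod (fun k => 1 + h * mu k) n.

Definition S_k (h : R) (n : nat) (mu : nat -> R) (k : nat) : R :=
  rsum (fun j => rprod (fun i => / Rabs (1 + h * mu ((k + i) mod n)%nat)) (S j)) n.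

Definition K0 (h : R) (n : nat) (mu : nat -> R) : R :=
  h * Rabs (e_nh h n mu) / Rabs (1 - Rabs (e_nh h n mu))
    * rmax_upto (S_k h n mu) (n - 1).

Definition negf (mu : nat -> R) : nat -> R := fun k => - mu k.

Definition HU_stable (L : (nat -> R) -> nat -> R) (f : nat -> R) (K : R) : Prop :=
  0 < K /\
  forall (eps : R), 0 < eps -> forall xi : nat -> R,
    (forall t, Rabs (L xi t - f t) <= eps) ->
    exists y : nat -> R, (forall t, L y t = f t) /\
      forall t, Rabs (xi t - y t) <= K * eps.

Definition pcoef (h : R) (lam : nat -> R) : nat -> R := fun t => lam (t + 2)%nat.
Definition qcoef (h : R) (lam : nat -> R) : nat -> R := fun t =>
  2 * delta h lam (t + 1)%nat + delta h lam (t + 2)%nat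
  - lam (t + 2)%nat * lam (t + 3)%nat.
Definition rcoef (h : R) (lam : nat -> R) : nat -> R := fun t =>
  delta h (delta h lam) t + lam t * delta h lam (t + 2)%nat
  - lam t * lam (t + 2)%nat * lam (t + 3)%nat.

Definition L3 (h : R) (lam : nat -> R) (y : nat -> R) : nat -> R := fun t =>
  delta h (delta h (delta h y)) t + pcoef h lam t * delta h (delta h y) t
  + qcoef h lam t * delta h y t + rcoef h lam t * y t.

From Stdlib Require Import Reals Lra Lia.
From Coquelicot Require Import Coquelicot.
Open Scope R_scope.

(* The operator factors as L3 = (Delta_h - lam(t+3)) (Delta_h + lam(t+2))
   (Delta_h + lam(t)), a composition of first-order operators whose
   coefficients are shifts of the n-cycles lam and -lam.  Given xi with
   |L3 xi| <= eps we invert the three factors one after the other; each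
   inversion costs a factor K0 of the corresponding cycle, so xi - z3 solves
   L3 y = 0 within K0(lam) K0(-lam)^2 eps of xi.

   The first-order step rests on a general fact about recurrences
   z(t+1) = b t z t + c t with |c| <= d: a nonnegative "Lyapunov bound" B with
   |b t| B t + 1 <= B (t+1) (resp. 1 + B (t+1) <= |b t| B t) yields the
   forward (resp. backward series) solution with |z t| <= d B t.  For an
   n-periodic coefficient, the paper's window sums S_k make
   |e(nh)| S_k / |1 - |e(nh)|| such a bound, growing when |e(nh)| < 1 and
   decaying when |e(nh)| > 1, and h times it is at most K0. *)

Lemma rsum_shift (f : nat -> R) (m : nat) :
  rsum f (S m) = f 0%nat + rsum (fun i => f (S i)) m.
Proof. induction m; simpl in *; [ring| rewrite IHm; ring]. Qed.

Lemma rprod_shift (f : nat -> R) (m : nat) :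
  rprod f (S m) = f 0%nat * rprod (fun i => f (S i)) m.
Proof. induction m; simpl in *; [ring| rewrite IHm; ring]. Qed.

Lemma rsum_ext (f g : nat -> R) (m : nat) : (forall i, f i = g i) -> rsum f m = rsum g m.
Proof. intro H; induction m; simpl; [ring| rewrite IHm, H; ring]. Qed.

Lemma rprod_ext (f g : nat -> R) (m : nat) : (forall i, f i = g i) -> rprod f m = rprod g m.
Proof. intro H; induction m; simpl; [ring| rewrite IHm, H; ring]. Qed.

Lemma rsum_scal (c : R) (f : nat -> R) (m : nat) :
  rsum (fun j => c * f j) m = c * rsum f m.
Proof. induction m; simpl; [ring| rewrite IHm; ring]. Qed.

Lemma rprod_abs (f : nat -> R) (m : nat) : Rabs (rprod f m) = rprod (fun i => Rabs (f i)) m.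
Proof. induction m; simpl; [apply Rabs_R1| rewrite Rabs_mult, IHm; ring]. Qed.

Lemma rprod_pos (f : nat -> R) (m : nat) : (forall i, 0 < f i) -> 0 < rprod f m.
Proof. intro H; induction m; simpl; [lra| apply Rmult_lt_0_compat; auto]. Qed.

Lemma rsum_nonneg (f : nat -> R) (m : nat) : (forall i, 0 <= f i) -> 0 <= rsum f m.
Proof. intro H; induction m; simpl; [lra| specialize (H m); lra]. Qed.

Lemma rsum_pos (f : nat -> R) (m : nat) : (forall i, 0 < f i) -> (1 <= m)%nat -> 0 < rsum f m.
Proof.
  intros H Hm; destruct m as [|m]; [lia|]; simpl.
  pose proof (rsum_nonneg f m (fun i => Rlt_le _ _ (H i))); specialize (H m); lra.
Qed.

Lemma rprod_inv (f : nat -> R) (m : nat) : rprod (fun i => / f i) m = / rprod f m.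
Proof. induction m; simpl; [now rewrite Rinv_1| rewrite IHm, Rinv_mult; ring]. Qed.

Lemma rmax_upto_ge (f : nat -> R) (m i : nat) : (i <= m)%nat -> f i <= rmax_upto f m.
Proof.
  induction m as [|m IH]; intro Hi; simpl.
  - replace i with 0%nat by lia; lra.
  - destruct (Nat.eq_dec i (S m)) as [->|Hne]; [apply Rmax_r|].
    eapply Rle_trans; [apply IH; lia| apply Rmax_l].
Qed.

Lemma sum_n_rsum (f : nat -> R) (N : nat) : sum_n f N = rsum f (S N).
Proof.
  induction N as [|N IH].
  - rewrite sum_O; simpl; ring.
  - rewrite sum_Sn, IH; reflexivity.
Qed.

Lemma series_nonneg_bounded (a : nat -> R) (M : R) :
  (forall j, 0 <= a j) -> (forall J, rsum a J <= M) -> ex_series a /\ Series a <= M.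
Proof.
  intros Ha HM.
  assert (Hex : ex_series a).
  { apply (ex_finite_lim_seq_incr _ M).
    - intro N; rewrite sum_Sn; unfold plus; simpl; specialize (Ha (S N)); lra.
    - intro N; rewrite sum_n_rsum; apply HM. }
  split; [exact Hex|].
  destruct Hex as [l Hl]. rewrite (is_series_unique a l Hl).
  exact (is_lim_seq_le (sum_n a) (fun _ => M) l M
           (fun N => eq_ind_r (fun x => x <= M) (HM (S N)) (sum_n_rsum a N))
           Hl (is_lim_seq_const M)).
Qed.

Lemma series_dominated (a q : nat -> R) (d : R) :
  0 <= d -> (forall j, Rabs (a j) <= d * q j) -> ex_series q ->
  ex_series a /\ Rabs (Series a) <= d * Series q.
Proof.
  intros Hd Ha Hq.
  assert (Hdq : ex_series (fun j => d * q j)).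
  { exact (@ex_series_scal_l R_AbsRing R_NormedModule d q Hq). }
  assert (Habs : ex_series (fun j => Rabs (a j))).
  { apply (@ex_series_le R_AbsRing R_CompleteNormedModule _ (fun j => d * q j)); [|exact Hdq].
    intro j; unfold norm; simpl; unfold abs; simpl. rewrite Rabs_Rabsolu; apply Ha. }
  split; [exact (ex_series_Rabs a Habs)|].
  rewrite <- Series_scal_l.
  eapply Rle_trans; [exact (Series_Rabs a Habs)|].
  apply Series_le; [|exact Hdq]. intro j; split; [apply Rabs_pos| apply Ha].
Qed.

Lemma periodic_mul (nu : nat -> R) (n : nat) :
  periodic nu n -> forall q r, nu (r + q * n)%nat = nu r.
Proof.
  intros P q; induction q as [|q IH]; intro r; [now rewrite Nat.add_0_r|].
  replace (r + S q * n)%nat with ((r + q * n) + n)%nat by lia.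
  rewrite P; apply IH.
Qed.

Lemma periodic_shift_mod (nu : nat -> R) (n : nat) : periodic nu n -> (1 <= n)%nat ->
  forall k i, nu ((k mod n + i) mod n) = nu (k + i)%nat.
Proof.
  intros P Hn k i.
  rewrite Nat.Div0.add_mod_idemp_l.
  rewrite (Nat.div_mod (k + i) n) at 2 by lia.
  replace (n * ((k + i) / n) + (k + i) mod n)%nat with ((k + i) mod n + (k + i) / n * n)%nat
    by lia.
  symmetry; apply (periodic_mul nu n P).
Qed.

Lemma rprod_period (f : nat -> R) (n k : nat) : periodic f n -> (forall i, f i <> 0) ->
  rprod (fun i => f (k + i)%nat) n = rprod f n.
Proof.
  intros P Hz; induction k as [|k IH]; [apply rprod_ext; reflexivity|].
  rewrite <- IH.
  assert (Hwin : rprod (fun i => f (k + i)%nat) (S n) = f k * rprod (fun i => f (S k + i)%nat) n).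
  { rewrite rprod_shift, Nat.add_0_r; f_equal; apply rprod_ext; intro i; f_equal; lia. }
  change (rprod (fun i => f (k + i)%nat) n * f (k + n)%nat
          = f k * rprod (fun i => f (S k + i)%nat) n) in Hwin.
  rewrite P in Hwin.
  apply (Rmult_eq_reg_l (f k)); [rewrite <- Hwin; ring| apply Hz].
Qed.

Section FirstOrderRecurrence.

(* A nonnegative sequence B satisfying a one-step comparison inequality is a
   "Lyapunov bound": the recurrence then has a solution with |z t| <= d * B t.
   The forward solution (z 0 = 0) works when B grows along the recurrence,
   the backward (series) solution when B decays along it. *)
Variables (b c B : nat -> R) (d : R).
Hypothesis d_nonneg : 0 <= d.
Hypothesis c_bounded : forall t, Rabs (c t) <= d.
Hypothesis B_nonneg : forall t, 0 <= B t.

Fixpoint forward_solution (t : nat) : R :=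
  match t with O => 0 | S t => b t * forward_solution t + c t end.

Lemma forward_solution_bound :
  (forall t, Rabs (b t) * B t + 1 <= B (S t)) ->
  forall t, Rabs (forward_solution t) <= d * B t.
Proof.
  intros HB t; induction t as [|t IH]; simpl.
  - rewrite Rabs_R0; apply Rmult_le_pos; auto.
  - eapply Rle_trans; [apply Rabs_triang|]. rewrite Rabs_mult.
    assert (Hb : Rabs (b t) * Rabs (forward_solution t) <= Rabs (b t) * (d * B t))
      by (apply Rmult_le_compat_l; [apply Rabs_pos| exact IH]).
    assert (Hstep : d * (Rabs (b t) * B t + 1) <= d * B (S t))
      by (apply Rmult_le_compat_l; auto).
    specialize (c_bounded t); nra.
Qed.

Hypothesis b_nonzero : forall t, b t <> 0.

Definition inv_prod (t j : nat) : R := rprod (fun i => / b (t + i)) (S j).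

Lemma inv_prod_S (t j : nat) : inv_prod t (S j) = / b t * inv_prod (S t) j.
Proof.
  unfold inv_prod; rewrite rprod_shift, Nat.add_0_r; f_equal.
  apply rprod_ext; intro i; f_equal; f_equal; lia.
Qed.

Hypothesis B_decay : forall t, 1 + B (S t) <= Rabs (b t) * B t.

Lemma inv_prod_partial_sums (J t : nat) :
  rsum (fun j => Rabs (inv_prod t j)) J <= B t.
Proof.
  revert t; induction J as [|J IH]; intro t; [simpl; auto|].
  rewrite rsum_shift.
  rewrite (rsum_ext _ (fun j => Rabs (/ b t) * Rabs (inv_prod (S t) j)))
    by (intro j; rewrite inv_prod_S, Rabs_mult; reflexivity).
  rewrite rsum_scal.
  replace (inv_prod t 0) with (/ b t) by (unfold inv_prod; simpl; rewrite Nat.add_0_r; ring).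
  assert (Hbt : 0 < Rabs (b t)) by (apply Rabs_pos_lt, b_nonzero).
  rewrite Rabs_inv.
  apply (Rmult_le_reg_l (Rabs (b t))); [exact Hbt|].
  specialize (IH (S t)); specialize (B_decay t).
  replace (Rabs (b t) * (/ Rabs (b t) + / Rabs (b t) * rsum (fun j => Rabs (inv_prod (S t) j)) J))
    with (1 + rsum (fun j => Rabs (inv_prod (S t) j)) J) by (field; lra).
  lra.
Qed.

Definition backward_solution (t : nat) : R :=
  - Series (fun j => c (t + j)%nat * inv_prod t j).

Lemma backward_series (t : nat) :
  ex_series (fun j => c (t + j)%nat * inv_prod t j) /\
  Rabs (backward_solution t) <= d * B t.
Proof.
  destruct (series_nonneg_bounded (fun j => Rabs (inv_prod t j)) (B t))
    as [Hq HqB]; [intro; apply Rabs_pos| intro J; apply inv_prod_partial_sums|].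
  destruct (series_dominated (fun j => c (t + j)%nat * inv_prod t j)
              (fun j => Rabs (inv_prod t j)) d d_nonneg) as [Hex Hle]; auto.
  { intro j; rewrite Rabs_mult; apply Rmult_le_compat_r; [apply Rabs_pos| auto]. }
  split; [exact Hex|]. unfold backward_solution; rewrite Rabs_Ropp.
  eapply Rle_trans; [exact Hle|]. apply Rmult_le_compat_l; auto.
Qed.

Lemma backward_solution_rec (t : nat) :
  backward_solution (S t) = b t * backward_solution t + c t.
Proof.
  unfold backward_solution.
  rewrite (Series_incr_1 _ (proj1 (backward_series t))).
  rewrite (Series_ext (fun j => c (t + S j)%nat * inv_prod t (S j))
             (fun j => / b t * (c (S t + j)%nat * inv_prod (S t) j))).
  2:{ intro j; rewrite inv_prod_S; replace (t + S j)%nat with (S t + j)%nat by lia; ring. }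
  rewrite Series_scal_l.
  replace (inv_prod t 0) with (/ b t) by (unfold inv_prod; simpl; rewrite Nat.add_0_r; ring).
  rewrite Nat.add_0_r. field. apply b_nonzero.
Qed.

End FirstOrderRecurrence.

Section PeriodicWeights.

(* For an n-periodic coefficient nu, the quantities S_k of the paper are the
   sums of the products [weight k j] of 1/|1 + h nu| over windows starting at
   k.  They satisfy the one-step identity [weight_sum_recurrence], which makes
   E * S_k / |1 - E| (E = |e_nu(nh)|) a Lyapunov bound for the first-order
   recurrence z (t+1) = (1 + h nu t) z t + h g t. *)
Variables (h : R) (n : nat) (nu : nat -> R).
Hypothesis n_pos : (1 <= n)%nat.
Hypothesis nu_periodic : periodic nu n.
Hypothesis factors_nonzero : forall k, 1 + h * nu k <> 0.

Definition weight (k j : nat) : R := rprod (fun i => / Rabs (1 + h * nu (k + i)%nat)) j.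
Definition weight_sum (k : nat) : R := rsum (fun j => weight k (S j)) n.

Lemma weight_pos (k j : nat) : 0 < weight k j.
Proof. apply rprod_pos; intro i; apply Rinv_0_lt_compat, Rabs_pos_lt, factors_nonzero. Qed.

Lemma weight_sum_nonneg (k : nat) : 0 <= weight_sum k.
Proof. apply rsum_nonneg; intro j; apply Rlt_le, weight_pos. Qed.

Lemma weight_S (k j : nat) :
  weight k (S j) = / Rabs (1 + h * nu k) * weight (S k) j.
Proof.
  unfold weight; rewrite rprod_shift, Nat.add_0_r; f_equal.
  apply rprod_ext; intro i; now replace (k + S i)%nat with (S k + i)%nat by lia.
Qed.

Lemma weight_full_period (k : nat) : weight k n = / Rabs (e_nh h n nu).
Proof.
  unfold weight, e_nh.
  rewrite (rprod_period (fun i => / Rabs (1 + h * nu i)) n k).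
  - rewrite rprod_abs, <- rprod_inv; reflexivity.
  - intro i; cbv beta; rewrite nu_periodic; reflexivity.
  - intro i; apply Rinv_neq_0_compat, Rabs_no_R0, factors_nonzero.
Qed.

Lemma weight_sum_recurrence (k : nat) :
  Rabs (1 + h * nu k) * weight_sum k = 1 + weight_sum (S k) - / Rabs (e_nh h n nu).
Proof.
  unfold weight_sum; rewrite <- rsum_scal.
  rewrite (rsum_ext _ (fun j => weight (S k) j)).
  2:{ intro j; rewrite weight_S; field; apply Rabs_no_R0, factors_nonzero. }
  assert (Hsplit := rsum_shift (fun j => weight (S k) j) n).
  simpl in Hsplit; rewrite weight_full_period in Hsplit.
  change (weight (S k) 0) with 1 in Hsplit; lra.
Qed.

(* Each window sum is one of the paper's S_0, ..., S_(n-1). *)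
Lemma weight_sum_le_max (k : nat) : weight_sum k <= rmax_upto (S_k h n nu) (n - 1).
Proof.
  replace (weight_sum k) with (S_k h n nu (k mod n)).
  - apply rmax_upto_ge; pose proof (Nat.mod_upper_bound k n); lia.
  - apply rsum_ext; intro j; apply rprod_ext; intro i.
    rewrite periodic_shift_mod; auto.
Qed.

Hypothesis e_nonzero : 0 < Rabs (e_nh h n nu).
Hypothesis e_not_one : Rabs (e_nh h n nu) <> 1.

Definition lyapunov_bound (m t : nat) : R :=
  Rabs (e_nh h n nu) * weight_sum (t + m) / Rabs (1 - Rabs (e_nh h n nu)).

Lemma lyapunov_bound_nonneg (m t : nat) : 0 <= lyapunov_bound m t.
Proof.
  unfold lyapunov_bound, Rdiv.
  apply Rmult_le_pos; [apply Rmult_le_pos; [lra| apply weight_sum_nonneg]|].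
  apply Rlt_le, Rinv_0_lt_compat, Rabs_pos_lt; lra.
Qed.

Lemma lyapunov_bound_growth (m t : nat) : Rabs (e_nh h n nu) < 1 ->
  Rabs (1 + h * nu (t + m)%nat) * lyapunov_bound m t + 1 = lyapunov_bound m (S t).
Proof.
  intro HE; unfold lyapunov_bound.
  assert (Hrec := weight_sum_recurrence (t + m)).
  set (E := Rabs (e_nh h n nu)) in *.
  rewrite (Rabs_pos_eq (1 - E)) by lra.
  replace (S t + m)%nat with (S (t + m)) by lia.
  replace (weight_sum (S (t + m))) with
    (Rabs (1 + h * nu (t + m)%nat) * weight_sum (t + m) - 1 + / E) by lra.
  field; lra.
Qed.

Lemma lyapunov_bound_decay (m t : nat) : 1 < Rabs (e_nh h n nu) ->
  1 + lyapunov_bound m (S t) = Rabs (1 + h * nu (t + m)%nat) * lyapunov_bound m t.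
Proof.
  intro HE; unfold lyapunov_bound.
  assert (Hrec := weight_sum_recurrence (t + m)).
  set (E := Rabs (e_nh h n nu)) in *.
  rewrite (Rabs_left1 (1 - E)) by lra.
  replace (S t + m)%nat with (S (t + m)) by lia.
  replace (weight_sum (S (t + m))) with
    (Rabs (1 + h * nu (t + m)%nat) * weight_sum (t + m) - 1 + / E) by lra.
  field; lra.
Qed.

Lemma lyapunov_bound_le_K0 (m t : nat) : 0 < h -> h * lyapunov_bound m t <= K0 h n nu.
Proof.
  intro Hh; unfold lyapunov_bound, K0.
  assert (0 < Rabs (1 - Rabs (e_nh h n nu))) by (apply Rabs_pos_lt; lra).
  replace (h * (Rabs (e_nh h n nu) * weight_sum (t + m) / Rabs (1 - Rabs (e_nh h n nu))))
    with (h * Rabs (e_nh h n nu) / Rabs (1 - Rabs (e_nh h n nu)) * weight_sum (t + m))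
    by (field; lra).
  apply Rmult_le_compat_l; [|apply weight_sum_le_max].
  unfold Rdiv; apply Rmult_le_pos; [apply Rmult_le_pos; lra|].
  apply Rlt_le, Rinv_0_lt_compat; lra.
Qed.

Lemma K0_pos : 0 < h -> 0 < K0 h n nu.
Proof.
  intro Hh.
  assert (Hlt : 0 < h * lyapunov_bound 0 0).
  { apply Rmult_lt_0_compat; [exact Hh|]. unfold lyapunov_bound, Rdiv.
    apply Rmult_lt_0_compat; [apply Rmult_lt_0_compat; [lra|]|].
    - apply rsum_pos; [intro j; apply weight_pos| exact n_pos].
    - apply Rinv_0_lt_compat, Rabs_pos_lt; lra. }
  pose proof (lyapunov_bound_le_K0 0 0 Hh); lra.
Qed.

End PeriodicWeights.

Definition first_order (h : R) (mu x : nat -> R) (t : nat) : R := delta h x t - mu t * x t.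
Definition shift (mu : nat -> R) (m : nat) : nat -> R := fun t => mu (t + m)%nat.

Lemma first_order_of_recurrence (h : R) (mu x g : nat -> R) (t : nat) : h <> 0 ->
  x (S t) = (1 + h * mu t) * x t + h * g t -> first_order h mu x t = g t.
Proof. intros Hh Hrec; unfold first_order, delta; rewrite Hrec; field; exact Hh. Qed.

Lemma first_order_ext (h : R) (mu x x' : nat -> R) (t : nat) :
  (forall s, x s = x' s) -> first_order h mu x t = first_order h mu x' t.
Proof. intro H; unfold first_order, delta; rewrite !H; reflexivity. Qed.

(* If |e_nu(nh)| < 1 it is the forward solution from z 0 = 0, otherwise the
   backward series solution; both are controlled by [lyapunov_bound]. *)
Lemma first_order_HU (h : R) (n : nat) (nu : nat -> R) (m : nat) (g : nat -> R) (eps : R) :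
  0 < h -> 0 <= eps -> (1 <= n)%nat -> periodic nu n ->
  (forall k, 1 + h * nu k <> 0) ->
  0 < Rabs (e_nh h n nu) -> Rabs (e_nh h n nu) <> 1 ->
  (forall t, Rabs (g t) <= eps) ->
  exists z, (forall t, first_order h (shift nu m) z t = g t) /\
            (forall t, Rabs (z t) <= K0 h n nu * eps).
Proof.
  intros Hh Heps Hn P Hz HE HE1 Hg.
  set (b := fun t => 1 + h * nu (t + m)%nat).
  set (c := fun t => h * g t).
  set (B := lyapunov_bound h n nu m).
  assert (Hc : forall t, Rabs (c t) <= h * eps).
  { intro t; unfold c; rewrite Rabs_mult, Rabs_pos_eq by lra.
    apply Rmult_le_compat_l; [lra| apply Hg]. }
  assert (HB : forall t, 0 <= B t) by (intro t; apply lyapunov_bound_nonneg; auto).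
  assert (Hsol : exists z, (forall t, z (S t) = b t * z t + c t) /\
                           (forall t, Rabs (z t) <= h * eps * B t)).
  { destruct (Rlt_or_le (Rabs (e_nh h n nu)) 1) as [Hsmall|Hbig].
    - exists (forward_solution b c); split; [reflexivity|].
      apply forward_solution_bound; auto; [apply Rmult_le_pos; lra|].
      intro t; right; apply lyapunov_bound_growth; auto.
    - assert (Hbig' : 1 < Rabs (e_nh h n nu)) by lra.
      assert (Hb : forall t, b t <> 0) by (intro t; apply Hz).
      assert (Hdecay : forall t, 1 + B (S t) <= Rabs (b t) * B t)
        by (intro t; right; apply lyapunov_bound_decay; auto).
      exists (backward_solution b c); split.
      + intro t; apply (backward_solution_rec b c B (h * eps)); auto; apply Rmult_le_pos; lra.
      + intro t; apply (backward_series b c B (h * eps)); auto; apply Rmult_le_pos; lra. }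
  destruct Hsol as [z [Hrec Hbound]]; exists z; split.
  - intro t; apply first_order_of_recurrence; [lra| apply Hrec].
  - intro t; eapply Rle_trans; [apply Hbound|].
    replace (h * eps * B t) with (h * B t * eps) by ring.
    apply Rmult_le_compat_r; [lra| apply lyapunov_bound_le_K0; auto].
Qed.

Lemma L3_factorization (h : R) (lam y : nat -> R) (t : nat) : h <> 0 ->
  L3 h lam y t = first_order h (shift lam 3)
    (first_order h (shift (negf lam) 2) (first_order h (shift (negf lam) 0) y)) t.
Proof.
  intro Hh; unfold L3, first_order, shift, pcoef, qcoef, rcoef, delta, negf.
  replace (t + 3)%nat with (S (S (S t))) by lia.
  replace (t + 2)%nat with (S (S t)) by lia.
  replace (t + 1)%nat with (S t) by lia.
  replace (S t + 2)%nat with (S (S (S t))) by lia.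
  rewrite !Nat.add_0_r; field; exact Hh.
Qed.

Lemma L3_linear (h : R) (lam x z : nat -> R) (t : nat) :
  L3 h lam (fun s => x s - z s) t = L3 h lam x t - L3 h lam z t.
Proof. unfold L3, delta; cbv beta; unfold Rdiv; ring. Qed.

Lemma cycle_factors_nonzero (h : R) (lam : nat -> R) : 0 < h ->
  (forall k, lam k <> 1 / h /\ lam k <> - (1 / h)) ->
  (forall k, 1 + h * lam k <> 0) /\ (forall k, 1 + h * negf lam k <> 0).
Proof.
  intros Hh Hl; split; intros k Hk; destruct (Hl k) as [Hp Hm]; unfold negf in Hk.
  - apply Hm; apply (Rmult_eq_reg_l h); [field_simplify; lra| lra].
  - apply Hp; apply (Rmult_eq_reg_l h); [field_simplify; lra| lra].
Qed.

Theorem theorem5p2 (h : R) (n : nat) (lam : nat -> R) :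
  0 < h ->
  is_n_cycle n lam ->
  (forall k, lam k <> 1 / h /\ lam k <> - (1 / h)) ->
  0 < Rabs (e_nh h n lam) -> Rabs (e_nh h n lam) <> 1 ->
  0 < Rabs (e_nh h n (negf lam)) -> Rabs (e_nh h n (negf lam)) <> 1 ->
  HU_stable (L3 h lam) (fun _ => 0)
    (K0 h n lam * (K0 h n (negf lam)) ^ 2).
Proof.
  intros Hh [Hn [P _]] Hl HE HE1 HF HF1.
  destruct (cycle_factors_nonzero h lam Hh Hl) as [Hz Hzn].
  assert (Pn : periodic (negf lam) n) by (intro k; unfold negf; rewrite P; reflexivity).
  assert (K1 := K0_pos h n lam Hn P Hz HE HE1 Hh).
  assert (K2 := K0_pos h n (negf lam) Hn Pn Hzn HF HF1 Hh).
  split; [apply Rmult_lt_0_compat; [lra| apply pow_lt; lra]|].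
  intros eps Heps xi Hxi.
  assert (Hdefect : forall t, Rabs (L3 h lam xi t) <= eps)
    by (intro t; specialize (Hxi t); rewrite Rminus_0_r in Hxi; exact Hxi).
  destruct (first_order_HU h n lam 3 (L3 h lam xi) eps) as [z1 [E1 B1]]; auto; [lra|].
  destruct (first_order_HU h n (negf lam) 2 z1 (K0 h n lam * eps)) as [z2 [E2 B2]];
    auto; [apply Rmult_le_pos; lra|].
  destruct (first_order_HU h n (negf lam) 0 z2 (K0 h n (negf lam) * (K0 h n lam * eps)))
    as [z3 [E3 B3]]; auto; [apply Rmult_le_pos; [lra| apply Rmult_le_pos; lra]|].
  exists (fun s => xi s - z3 s); split.
  - intro t; rewrite L3_linear, (L3_factorization h lam z3 t) by lra.
    rewrite (first_order_ext _ _ _ z1), E1; [ring|].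
    intro s; rewrite (first_order_ext _ _ _ z2); [apply E2| apply E3].
  - intro t; replace (xi t - (xi t - z3 t)) with (z3 t) by ring.
    eapply Rle_trans; [apply B3| right; ring].
Qed.
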